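(* Let $A$ be a quaternion or octonion division algebra over an arbitrary field $F$, and $f(x)\in A[x]$ of even degree $2n$. Suppose $f(x)$ has $n$ spherical roots from $n$ distinct quadratic-equivalence classes. Then $f(x)=c\,g(x)$ for some $c\in A$ and $g(x)\in F[x]$.
   Context: For an $F$-algebra $B$ with involution and $\gamma\in F^\times$, the Cayley--Dickson double $B\{\gamma\}$ is $B\times B$ with componentwise linear operations, product $(a,b)(c,d)=(ac+\gamma\bar d b,\ da+b\bar c)$ and involution $\overline{(a,b)}=(\bar a,-b)$. Cayley--Dickson algebras over $F$: $A_1=F[\ell_1:\ell_1^2=\ell_1+\mu]$ with $\mu\in F$, $4\mu+1\neq0$, involution $\overline{\alpha+\beta\ell_1}=(\alpha+\beta)-\beta\ell_1$, and $A_{k+1}=A_k\{\gamma_k\}$, $\gamma_k\in F^\times$. Quaternion algebras are the $A_2$, octonion algebras the $A_3$; division means the norm is anisotropic. Trace $\mathrm{tr}(\lambda)=\lambda+\bar\lambda\in F$, norm $\mathrm{n}(\lambda)=\bar\lambda\lambda\in F$, characteristic polynomial $p_\lambda(x)=x^2-\mathrm{tr}(\lambda)x+\mathrm{n}(\lambda)$. $A[x]=A\otimes_F F[x]$ with central $x$; $f(x)=a_mx^m+\dots+a_0$; substitution $f(r)=\sum_k a_k(r^k)$; $c\,g(x)$ means multiplying each coefficient of $g$ by $c$ on the left. A root $\lambda\in A\setminus F$ of $f$ is spherical if every $r\in A$ with $p_\lambda(r)=0$ is a root of $f$. Elements are quadratically-equivalent if they have the same trace and norm. *)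

From mathcomp Require Import all_boot all_order all_algebra.
Set Implicit Arguments. Unset Strict Implicit. Unset Printing Implicit Defensive.
Import GRing.Theory.
Local Open Scope ring_scope.

(* Level 0 of [cd] is A_1 = F[l : l^2 = l + mu], an element (a, b) meaning a + b l.
   Level k+1 is the Cayley--Dickson double (cd k){gam k}.
   Hence A_2 (quaternions) = cd 1 and A_3 (octonions) = cd 2, and the paper's
   gamma_j corresponds to [gam (j-1)]. *)

Section CD.
Variable F : fieldType.

Fixpoint cd (k : nat) : Type :=
  match k with 0 => (F * F)%type | k'.+1 => (cd k' * cd k')%type end.

Fixpoint cd0 (k : nat) : cd k :=
  match k as k0 return cd k0 with 0 => (0, 0) | k'.+1 => (cd0 k', cd0 k') end.

Fixpoint cdemb (k : nat) : F -> cd k :=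
  match k as k0 return F -> cd k0 with
  | 0 => fun a => (a, 0)
  | k'.+1 => fun a => (cdemb k' a, cd0 k')
  end.

Fixpoint cdscal (k : nat) : cd k -> F :=
  match k as k0 return cd k0 -> F with
  | 0 => fun x => x.1
  | k'.+1 => fun x => cdscal x.1
  end.

Fixpoint cdadd (k : nat) : cd k -> cd k -> cd k :=
  match k as k0 return cd k0 -> cd k0 -> cd k0 with
  | 0 => fun x y => (x.1 + y.1, x.2 + y.2)
  | k'.+1 => fun x y => (cdadd x.1 y.1, cdadd x.2 y.2)
  end.

Fixpoint cdopp (k : nat) : cd k -> cd k :=
  match k as k0 return cd k0 -> cd k0 with
  | 0 => fun x => (- x.1, - x.2)
  | k'.+1 => fun x => (cdopp x.1, cdopp x.2)
  end.

(* involution: conj (a + b l) = (a + b) - b l ;  conj (a, b) = (conj a, - b) *)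
Fixpoint cdconj (k : nat) : cd k -> cd k :=
  match k as k0 return cd k0 -> cd k0 with
  | 0 => fun x => (x.1 + x.2, - x.2)
  | k'.+1 => fun x => (cdconj x.1, cdopp x.2)
  end.

Variables (mu : F) (gam : nat -> F).

(* (a + b l)(c + d l) = (ac + mu bd) + (ad + bc + bd) l ;
   (a,b)(c,d) = (ac + gamma conj(d) b, d a + b conj(c)) *)
Fixpoint cdmul (k : nat) : cd k -> cd k -> cd k :=
  match k as k0 return cd k0 -> cd k0 -> cd k0 with
  | 0 => fun x y => (x.1 * y.1 + mu * (x.2 * y.2), x.1 * y.2 + x.2 * y.1 + x.2 * y.2)
  | k'.+1 => fun x y =>
      (cdadd (cdmul x.1 y.1) (cdmul (cdemb k' (gam k')) (cdmul (cdconj y.2) x.2)),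
       cdadd (cdmul y.2 x.1) (cdmul x.2 (cdconj y.1)))
  end.

Definition cdtr (k : nat) (x : cd k) : F := cdscal (cdadd x (cdconj x)).
Definition cdnorm (k : nat) (x : cd k) : F := cdscal (cdmul (cdconj x) x).

Fixpoint cdpow (k : nat) (r : cd k) (m : nat) : cd k :=
  match m with 0 => cdemb k 1 | m'.+1 => cdmul r (cdpow r m') end.

(* polynomials in A[x] as coefficient lists [a_0; ...; a_m];
   substitution f(r) = sum_i a_i (r^i) *)
Definition cdeval (k : nat) (f : seq (cd k)) (r : cd k) : cd k :=
  foldr (@cdadd k) (cd0 k)
    [seq cdmul (nth (cd0 k) f i) (cdpow r i) | i <- iota 0 (size f)].

Definition cdcharpoly (k : nat) (lam r : cd k) : cd k :=
  cdadd (cdadd (cdmul r r) (cdopp (cdmul (cdemb k (cdtr lam)) r)))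
        (cdemb k (cdnorm lam)).

Definition quad_equiv (k : nat) (x y : cd k) : Prop :=
  cdtr x = cdtr y /\ cdnorm x = cdnorm y.

Definition spherical_root (k : nat) (f : seq (cd k)) (lam : cd k) : Prop :=
  (~ exists a : F, lam = cdemb k a) /\
  cdeval f lam = cd0 k /\
  (forall r : cd k, cdcharpoly lam r = cd0 k -> cdeval f r = cd0 k).

(* division: the norm form is anisotropic *)
Definition cd_division (k : nat) : Prop :=
  forall x : cd k, cdnorm x = 0 -> x = cd0 k.

End CD.

(* Write x^i = P_i + Q_i x modulo p_lam(x) = x^2 - tr(lam) x + n(lam).  At every root r of
   p_lam in A this gives f(r) = U + V r with U = sum_i a_i P_i and V = sum_i a_i Q_i.  A
   spherical root lam yields two distinct roots lam and r of p_lam with f(lam) = f(r) = 0,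
   hence V (r - lam) = 0; multiplying on the right by the conjugate of r - lam gives
   V n(r - lam) = 0 (octonions are alternative), so V = U = 0 as the norm is anisotropic.
   Read coordinatewise, this says that p_lam divides each F-polynomial formed by one
   F-coordinate of the coefficients of f.  The p_lam of distinct quadratic-equivalence
   classes are distinct monic irreducible quadratics, so their product g, of degree 2n,
   divides all these polynomials of degree at most 2n: each is a scalar multiple of g,
   which means f = c g with c the leading coefficient of f. *)

From mathcomp Require Import all_boot all_order all_algebra ring zify.
Set Implicit Arguments. Unset Strict Implicit. Unset Printing Implicit Defensive.
Import GRing.Theory.
Local Open Scope ring_scope.

Section QuadraticPolynomial.
Variable F : fieldType.
Implicit Types (t N : F).

Definition quadp t N : {poly F} := 'X^2 - t%:P * 'X + N%:P.

Lemma quadpE t N : quadp t N = Poly [:: N; -t; 1].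
Proof.
apply/polyP => i; rewrite coef_Poly coefD coefB coefCM coefXn coefX coefC.
by case: i => [|[|[|i]]] /=; rewrite ?nth_nil; ring.
Qed.

Lemma quadp_seq t N : quadp t N = [:: N; -t; 1] :> seq F.
Proof. by rewrite quadpE (@PolyK _ 1) //= oner_neq0. Qed.

Lemma size_quadp t N : size (quadp t N) = 3%N.
Proof. by rewrite quadp_seq. Qed.

Lemma monic_quadp t N : quadp t N \is monic.
Proof. by rewrite monicE lead_coefE quadp_seq. Qed.

Lemma quadp_irreducible t N :
  (forall a, a ^+ 2 - t * a + N != 0) -> irreducible_poly (quadp t N).
Proof.
move=> noroot; apply: cubic_irreducible => [|a]; first by rewrite size_quadp.
by rewrite /root /quadp !hornerE noroot.
Qed.

Lemma coprimep_quadp t N t' N' :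
    (forall a, a ^+ 2 - t * a + N != 0) -> (forall a, a ^+ 2 - t' * a + N' != 0) ->
  (t, N) != (t', N') -> coprimep (quadp t N) (quadp t' N').
Proof.
move=> noroot noroot' neq; apply/coprimepP => d dvd_d dvd_d'.
have [//|eqp_d] := irredp_XsubCP (quadp_irreducible noroot) dvd_d.
have : quadp t N %= quadp t' N'.
  by rewrite -dvdp_size_eqp ?size_quadp // -(eqp_dvdl _ eqp_d).
rewrite eqp_monic ?monic_quadp // => /eqP eq_q; move: neq.
have := congr1 (fun p : {poly F} => (p`_0, p`_1)) eq_q.
by rewrite /= !quadp_seq /= => -[-> /oppr_inj ->]; rewrite eqxx.
Qed.

Fixpoint quadrem t N (i : nat) : F * F :=
  if i is i'.+1 then let: (P, Q) := quadrem t N i' in (- (N * Q), P + t * Q)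
  else (1, 0).

Lemma size_linear_lt_quadp t N (P Q : F) :
  (size (Q%:P * 'X + P%:P)%R < size (quadp t N))%N.
Proof.
rewrite size_MXaddC size_quadp; case: ifP => // _.
by rewrite !ltnS size_polyC_leq1.
Qed.

Lemma modp_Xn_quadp t N i :
  'X^i %% quadp t N = (quadrem t N i).2%:P * 'X + (quadrem t N i).1%:P.
Proof.
elim: i => [|i IH].
  by rewrite /= polyC0 mul0r add0r modp_small // size_poly1 size_quadp.
rewrite exprS -modp_mul IH /=; case: (quadrem t N i) => P Q /=.
rewrite -[RHS](modp_addl_mul_small Q%:P (size_linear_lt_quadp t N _ _)).
by congr (_ %% _); rewrite /quadp !polyCD !polyCM !polyCN; ring.
Qed.

Lemma quadp_dvd_poly t N m (c : nat -> F) :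
    \sum_(i < m) (quadrem t N i).1 * c i = 0 ->
    \sum_(i < m) (quadrem t N i).2 * c i = 0 ->
  quadp t N %| \poly_(i < m) c i.
Proof.
move=> sum1 sum2; apply/modp_eq0P; rewrite poly_def.
have -> : (\sum_(i < m) c i *: 'X^i) %% quadp t N =
    (\sum_(i < m) (quadrem t N i).2 * c i)%:P * 'X
    + (\sum_(i < m) (quadrem t N i).1 * c i)%:P.
  rewrite !raddf_sum /= mulr_suml -big_split /=.
  elim/big_rec2: _ => [|i p q _ <-]; first by rewrite mod0p.
  by rewrite modpD modpZl modp_Xn_quadp !polyCM -!mul_polyC; ring.
by rewrite sum1 sum2 mul0r addr0.
Qed.

End QuadraticPolynomial.

Section CoprimeProduct.
Variable F : fieldType.

Lemma dvdp_prod_coprime (I : finType) (p : I -> {poly F}) (h : {poly F}) :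
    (forall i j, i != j -> coprimep (p i) (p j)) -> (forall i, p i %| h) ->
  \prod_i p i %| h.
Proof.
move=> coprime_p dvd_p; rewrite -big_enum /=.
move: (enum_uniq I); elim: (enum I) => [|i s IH] /=; first by rewrite big_nil dvd1p.
case/andP=> i_notin_s uniq_s; rewrite big_cons Gauss_dvdp ?dvd_p ?IH //.
rewrite big_seq; apply: (big_ind (coprimep (p i))) => [|q r|j j_in_s].
- exact: coprimep1.
- by rewrite coprimepMr => -> ->.
- by apply: coprime_p; apply: contraNneq i_notin_s => ->.
Qed.

Lemma dvdp_monic_eq_scale (P h : {poly F}) (d : nat) :
  P \is monic -> size P = d.+1 -> P %| h -> (size h <= d.+1)%N -> h = h`_d *: P.
Proof.
move=> monP sizeP /divpK h_eq size_h; rewrite -{}h_eq in size_h *.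
have [->|q_neq0] := eqVneq (h %/ P) 0; first by rewrite mul0r coef0 scale0r.
have size_q : (size (h %/ P)%R <= 1)%N.
  by move: size_h; rewrite size_Mmonic // sizeP addnS /= -[d.+1]add1n leq_add2r.
have lead_P : P`_d = 1 by rewrite -(monicP monP) lead_coefE sizeP.
by rewrite (size1_polyC size_q) mul_polyC coefZ lead_P mulr1.
Qed.

End CoprimeProduct.

Section AllLevels.
Variables (F : fieldType) (mu : F) (gam : nat -> F).
Local Notation mul := (cdmul mu gam).

Lemma cdaddx0 m (x : cd F m) : cdadd x (cd0 F m) = x.
Proof. by elim: m x => [|m IH] [x1 x2] /=; rewrite ?addr0 ?IH. Qed.

Lemma cdadd0x m (x : cd F m) : cdadd (cd0 F m) x = x.
Proof. by elim: m x => [|m IH] [x1 x2] /=; rewrite ?add0r ?IH. Qed.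

Lemma cdaddxN m (x : cd F m) : cdadd x (cdopp x) = cd0 F m.
Proof. by elim: m x => [|m IH] [x1 x2] /=; rewrite ?subrr ?IH. Qed.

Lemma cdaddNK m (x y : cd F m) : cdadd (cdadd y (cdopp x)) x = y.
Proof. by elim: m x y => [|m IH] [x1 x2] [y1 y2] /=; rewrite ?subrK ?IH. Qed.

Lemma cdaddI m (u x y : cd F m) : cdadd u x = cdadd u y -> x = y.
Proof.
elim: m u x y => [|m IH] [u1 u2] [x1 x2] [y1 y2] /= [eq1 eq2].
  by move/addrI: eq1 => ->; move/addrI: eq2 => ->.
by rewrite (IH _ _ _ eq1) (IH _ _ _ eq2).
Qed.

Lemma cdaddACA m (x y z w : cd F m) :
  cdadd (cdadd x y) (cdadd z w) = cdadd (cdadd x z) (cdadd y w).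
Proof.
elim: m x y z w => [|m IH] [x1 x2] [y1 y2] [z1 z2] [w1 w2] /=.
  by rewrite (addrACA x1) (addrACA x2).
by rewrite (IH x1) (IH x2).
Qed.

Lemma cdemb0 m : cdemb m 0 = cd0 F m.
Proof. by elim: m => //= m ->. Qed.

Lemma cdopp0 m : cdopp (cd0 F m) = cd0 F m.
Proof. by elim: m => [|m IH] /=; rewrite ?oppr0 ?IH. Qed.

Lemma cdconj0 m : cdconj (cd0 F m) = cd0 F m.
Proof. by elim: m => [|m IH] /=; rewrite ?addr0 ?oppr0 ?IH ?cdopp0. Qed.

Lemma cdmul0 m : (forall x : cd F m, mul (cd0 F m) x = cd0 F m) /\
                 (forall x : cd F m, mul x (cd0 F m) = cd0 F m).
Proof.
elim: m => [|m [IHl IHr]].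
  by split=> -[x1 x2] /=; rewrite !(mul0r, mulr0, addr0).
by split=> -[x1 x2] /=; rewrite ?cdconj0 ?IHl ?IHr cdaddx0.
Qed.

Lemma cdmul0x m (x : cd F m) : mul (cd0 F m) x = cd0 F m.
Proof. exact: (cdmul0 m).1. Qed.

Lemma cdmulx0 m (x : cd F m) : mul x (cd0 F m) = cd0 F m.
Proof. exact: (cdmul0 m).2. Qed.

End AllLevels.

Section Coordinates.
Variable F : fieldType.

Fixpoint cdcoord (m : nat) (j : nat) : cd F m -> F :=
  match m as m0 return cd F m0 -> F with
  | 0 => fun x => if odd j then x.2 else x.1
  | m'.+1 => fun x => cdcoord j./2 (if odd j then x.2 else x.1)
  end.

Lemma cdcoordD m j (x y : cd F m) :
  cdcoord j (cdadd x y) = cdcoord j x + cdcoord j y.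
Proof. by elim: m j x y => [|m IH] j [x1 x2] [y1 y2] /=; case: (odd j); rewrite ?IH. Qed.

Lemma cdcoord0 m j : cdcoord j (cd0 F m) = 0.
Proof. by elim: m j => [|m IH] j /=; case: (odd j). Qed.

Lemma cdcoord_inj m (x y : cd F m) : (forall j, cdcoord j x = cdcoord j y) -> x = y.
Proof.
elim: m x y => [|m IH] [x1 x2] [y1 y2] eq_xy.
  by have := eq_xy 0%N; have := eq_xy 1%N; rewrite /= => -> ->.
have eq_even j : cdcoord j x1 = cdcoord j y1.
  by have := eq_xy j.*2; rewrite /= odd_double half_double.
have eq_odd j : cdcoord j x2 = cdcoord j y2.
  by have := eq_xy j.*2.+1; rewrite /= odd_double uphalf_double.
by rewrite (IH _ _ eq_even) (IH _ _ eq_odd).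
Qed.

End Coordinates.

Ltac cd_split :=
  repeat match goal with |- (_, _) = (_, _) => refine (f_equal2 pair _ _) end.
Ltac cd_destruct := repeat match goal with
  | x : cd _ 0 |- _ => destruct x as [? ?]
  | x : cd _ 1 |- _ => destruct x as [[? ?] [? ?]]
  | x : cd _ 2 |- _ => destruct x as [[[? ?] [? ?]] [[? ?] [? ?]]]
  end.

(* u = -1 - ell / mu in A_1 = F[ell], lifted to A_m: n(u) = 1 and n(u - 1) = (4 mu + 1) / mu. *)
Fixpoint cdunit (F : fieldType) (mu : F) (m : nat) : cd F m :=
  match m as m0 return cd F m0 with
  | 0 => (-1, - mu^-1)
  | m'.+1 => (cdunit mu m', cd0 F m')
  end.

Definition cdquad (F : fieldType) (mu : F) (gam : nat -> F) (m : nat) (t N : F)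
    (r : cd F m) :=
  cdadd (cdadd (cdmul mu gam r r) (cdopp (cdmul mu gam (cdemb m t) r))) (cdemb m N).

Section UpToOctonions.
Variables (F : fieldType) (mu : F) (gam : nat -> F) (m : nat).
Hypothesis hm : (m <= 2)%N.
Local Notation mul := (cdmul mu gam).
Local Notation norm := (cdnorm mu gam).
Local Notation emb := (cdemb m).

Ltac by_levels :=
  repeat match goal with x : cd _ _ |- _ => revert x end;
  case: m hm => [|[|[|?]]] // _ *; cd_destruct;
  rewrite /cdquad /cdtr /cdnorm;
  cbn [cdmul cdadd cdopp cdconj cdemb cd0 cdscal cdunit cdcoord fst snd]; cd_split.

Lemma cdmulDr (v x y : cd F m) : mul v (cdadd x y) = cdadd (mul v x) (mul v y).
Proof. by_levels; ring. Qed.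

Lemma cdmulDl (x y r : cd F m) : mul (cdadd x y) r = cdadd (mul x r) (mul y r).
Proof. by_levels; ring. Qed.

Lemma cdmulN (v x : cd F m) : mul v (cdopp x) = cdopp (mul v x).
Proof. by_levels; ring. Qed.

Lemma cdmulx1 (v : cd F m) : mul v (emb 1) = v.
Proof. by_levels; ring. Qed.

Lemma cdmul_embCA (c : F) (a r : cd F m) :
  mul a (mul (emb c) r) = mul (mul a (emb c)) r.
Proof. by_levels; ring. Qed.

Lemma cdmul_conj (v d : cd F m) : mul (mul v d) (cdconj d) = mul v (emb (norm d)).
Proof. by_levels; ring. Qed.

Lemma cdnormM (x y : cd F m) : norm (mul x y) = norm x * norm y.
Proof. by_levels; ring. Qed.

Lemma cdnorm_sub_emb (x : cd F m) (a : F) :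
  norm (cdadd x (cdopp (emb a))) = a ^+ 2 - cdtr x * a + norm x.
Proof. by_levels; ring. Qed.

Lemma cdcharpoly_self (x : cd F m) : cdquad mu gam (cdtr x) (norm x) x = cd0 F m.
Proof. by_levels; ring. Qed.

Lemma cdmul_quad_rem (t N P Q : F) (r : cd F m) :
  mul r (cdadd (emb P) (mul (emb Q) r)) =
  cdadd (cdadd (emb (- (N * Q))) (mul (emb (P + t * Q)) r))
        (mul (emb Q) (cdquad mu gam t N r)).
Proof. by_levels; ring. Qed.

Lemma cdcoord_mul_emb j (c : F) (x : cd F m) :
  cdcoord j (mul x (emb c)) = c * cdcoord j x.
Proof.
by_levels; repeat match goal with |- context [odd ?n] => case: (odd n) => /= end; ring.
Qed.

Lemma cdmul_emb_eq0 (c : F) (v : cd F m) :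
  c != 0 -> mul v (emb c) = cd0 F m -> v = cd0 F m.
Proof.
move=> c_neq0 vc0; apply: cdcoord_inj => j; rewrite cdcoord0.
have /eqP := congr1 (cdcoord j) vc0.
by rewrite cdcoord_mul_emb cdcoord0 mulf_eq0 (negbTE c_neq0) => /eqP.
Qed.

Lemma cd_division_mu_neq0 : cd_division mu gam m -> mu != 0.
Proof.
case: m hm => [|[|[|?]]] // _ hdiv; apply/eqP => mu0; [
  suff /(congr1 (cdcoord 1)) : ((0, 1) : cd F 0) = cd0 F 0
    by move/eqP; rewrite /= oner_eq0 |
  suff /(congr1 (cdcoord 2)) : (((0, 1), (0, 0)) : cd F 1) = cd0 F 1
    by move/eqP; rewrite /= oner_eq0 |
  suff /(congr1 (cdcoord 4)) : ((((0, 1), (0, 0)), ((0, 0), (0, 0))) : cd F 2) = cd0 F 2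
    by move/eqP; rewrite /= oner_eq0];
  by apply: hdiv; rewrite /cdnorm /= mu0; ring.
Qed.

Lemma cdnorm_unit : mu != 0 -> norm (cdunit mu m) = 1.
Proof. by move=> mu_neq0; by_levels; field. Qed.

Lemma cdnorm_unit_sub1 :
  mu != 0 -> norm (cdadd (cdunit mu m) (cdopp (emb 1))) = (4%:R * mu + 1) / mu.
Proof. by move=> mu_neq0; by_levels; field. Qed.

End UpToOctonions.

Lemma cdnorm_pair (F : fieldType) (mu : F) (gam : nat -> F) m (x y : cd F m) :
  (m <= 1)%N ->
  cdnorm mu gam ((x, y) : cd F m.+1) = cdnorm mu gam x - gam m * cdnorm mu gam y.
Proof.
case: m x y => [|[|?]] // x y _; cd_destruct; rewrite /cdnorm;
  cbn [cdmul cdadd cdopp cdconj cdemb cd0 cdscal fst snd]; ring.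
Qed.

Section Twin.
Variables (F : fieldType) (mu : F) (gam : nat -> F).
Hypotheses (mu_neq0 : mu != 0) (hmu : 4%:R * mu + 1 != 0).
Local Notation mul := (cdmul mu gam).
Local Notation norm := (cdnorm mu gam).

Lemma cdmul_unit_fixed m (hm : (m <= 2)%N) (y : cd F m) :
  mul y (cdunit mu m) = y -> y = cd0 F m.
Proof.
move=> yu_y; set w := cdadd (cdunit mu m) (cdopp (cdemb m 1)).
have yw0 : mul y w = cd0 F m by rewrite cdmulDr // cdmulN // cdmulx1 // yu_y cdaddxN.
have nw_neq0 : norm w != 0 by rewrite cdnorm_unit_sub1 // mulf_neq0 ?invr_eq0.
apply: (cdmul_emb_eq0 (mu := mu) (gam := gam) hm nw_neq0).
by rewrite -cdmul_conj // yw0 cdmul0x.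
Qed.

(* Conjugation only negates the second half, so in characteristic 2 it fixes non-central
   elements; the second root of p_x is obtained by twisting with [cdunit] instead. *)
Fixpoint cdtwin m : cd F m -> cd F m :=
  match m as m0 return cd F m0 -> cd F m0 with
  | 0 => fun x => cdconj x
  | m'.+1 => fun x => (cdtwin x.1, mul x.2 (cdunit mu m'))
  end.

Lemma quad_equiv_cdtwin m (hm : (m <= 2)%N) (x : cd F m) :
  quad_equiv mu gam (cdtwin x) x.
Proof.
elim: m hm x => [|m IH] hm [x1 x2].
  by split; rewrite /cdtr /cdnorm /=; ring.
have [tr_eq norm_eq] := IH (ltnW hm) x1.
split; first exact: tr_eq.
by rewrite !cdnorm_pair // norm_eq cdnormM ?cdnorm_unit ?mulr1 // ltnW.
Qed.

Lemma cdtwin_fixed m (hm : (m <= 2)%N) (x : cd F m) :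
  cdtwin x = x -> exists a, x = cdemb m a.
Proof.
elim: m hm x => [|m IH] hm [x1 x2] /= [eq1 eq2].
  have x2_0 : x2 = 0 by apply: (@addrI _ x1); rewrite addr0.
  by exists x1; rewrite x2_0.
have [a ->] := IH (ltnW hm) x1 eq1.
by exists a; rewrite (cdmul_unit_fixed (ltnW hm) eq2).
Qed.

Lemma exists_second_root m (hm : (m <= 2)%N) (l : cd F m) :
  (~ exists a, l = cdemb m a) ->
  exists2 r, r <> l & cdquad mu gam (cdtr l) (norm l) r = cd0 F m.
Proof.
move=> l_notin_F; exists (cdtwin l); first by move/(cdtwin_fixed hm).
by have [<- <-] := quad_equiv_cdtwin hm l; apply: cdcharpoly_self.
Qed.

End Twin.

Section SphericalRoots.
Variables (F : fieldType) (mu : F) (gam : nat -> F) (m : nat).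
Hypotheses (hm : (m <= 2)%N) (hdiv : cd_division mu gam m) (hmu : 4%:R * mu + 1 != 0).
Local Notation mul := (cdmul mu gam).
Local Notation norm := (cdnorm mu gam).
Local Notation emb := (cdemb m).
Local Notation zero := (cd0 F m).

Lemma cdpow_quad_root t N (r : cd F m) i :
  cdquad mu gam t N r = zero ->
  cdpow mu gam r i = cdadd (emb (quadrem t N i).1) (mul (emb (quadrem t N i).2) r).
Proof.
move=> root_r; elim: i => [|i IH] /=; first by rewrite cdemb0 cdmul0x cdaddx0.
rewrite IH; case: (quadrem t N i) => P Q /=.
by rewrite (cdmul_quad_rem mu gam hm t N) root_r cdmulx0 cdaddx0.
Qed.

Definition cdcomb (f : seq (cd F m)) (c : nat -> F) : cd F m :=
  foldr (@cdadd F m) zero [seq mul (nth zero f i) (emb (c i)) | i <- iota 0 (size f)].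

Lemma cdcoord_comb j f c :
  cdcoord j (cdcomb f c) = \sum_(i < size f) c i * cdcoord j (nth zero f i).
Proof.
rewrite /cdcomb -(big_mkord xpredT (fun i => c i * cdcoord j (nth zero f i))).
rewrite /index_iota subn0.
elim: (iota 0 (size f)) => [|i s IH] /=; first by rewrite big_nil cdcoord0.
by rewrite big_cons cdcoordD cdcoord_mul_emb // IH.
Qed.

Lemma cdeval_quad_root t N (f : seq (cd F m)) r :
  cdquad mu gam t N r = zero ->
  cdeval mu gam f r =
  cdadd (cdcomb f (fun i => (quadrem t N i).1))
        (mul (cdcomb f (fun i => (quadrem t N i).2)) r).
Proof.
move=> root_r; rewrite /cdeval /cdcomb.
elim: (iota 0 (size f)) => [|i s IH] /=; first by rewrite cdmul0x cdaddx0.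
by rewrite IH (cdpow_quad_root _ root_r) cdmulDr // cdmul_embCA // cdaddACA cdmulDl.
Qed.

Lemma cdmul_cancel_roots (u v x y : cd F m) :
  cdadd u (mul v x) = zero -> cdadd u (mul v y) = zero -> x <> y -> v = zero.
Proof.
move=> ux0 uy0 x_neq_y.
have vx_vy : mul v x = mul v y by apply: (@cdaddI _ _ u); rewrite ux0 uy0.
set d := cdadd y (cdopp x).
have vd0 : mul v d = zero by rewrite cdmulDr // cdmulN // vx_vy cdaddxN.
have nd_neq0 : norm d != 0.
  apply/eqP => /hdiv d0; apply: x_neq_y.
  by rewrite -(cdaddNK x y) -/d d0 cdadd0x.
apply: (cdmul_emb_eq0 (mu := mu) (gam := gam) hm nd_neq0).
by rewrite -cdmul_conj // vd0 cdmul0x.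
Qed.

Lemma cd_quadp_noroot (l : cd F m) :
  (~ exists a, l = emb a) -> forall a, a ^+ 2 - cdtr l * a + norm l != 0.
Proof.
move=> l_notin_F a; apply/eqP => root_a; apply: l_notin_F; exists a.
have /hdiv l_a0 := etrans (cdnorm_sub_emb mu gam hm l a) root_a.
by rewrite -(cdaddNK (emb a) l) l_a0 cdadd0x.
Qed.

Definition cdcoordpoly (f : seq (cd F m)) j : {poly F} :=
  \poly_(i < size f) cdcoord j (nth zero f i).

Lemma spherical_root_dvdp (f : seq (cd F m)) l j :
  spherical_root mu gam f l ->
  quadp (cdtr l) (norm l) %| cdcoordpoly f j.
Proof.
case=> l_notin_F [fl0 f_sph].
have mu_neq0 := cd_division_mu_neq0 hm hdiv.
have [r r_neq_l root_r] := exists_second_root gam mu_neq0 hmu hm l_notin_F.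
have := cdeval_quad_root f (cdcharpoly_self mu gam hm l); rewrite fl0 => /esym ev_l.
have := cdeval_quad_root f root_r; rewrite f_sph // => /esym ev_r.
have V0 := cdmul_cancel_roots ev_l ev_r (nesym r_neq_l).
rewrite V0 cdmul0x cdaddx0 in ev_l.
apply: quadp_dvd_poly; [move: (congr1 (cdcoord j) ev_l) | move: (congr1 (cdcoord j) V0)];
  by rewrite cdcoord_comb cdcoord0.
Qed.

Lemma coef_cdcoordpoly (f : seq (cd F m)) j i :
  (cdcoordpoly f j)`_i = cdcoord j (nth zero f i).
Proof.
by rewrite coef_poly; case: ltnP => // size_le; rewrite nth_default // cdcoord0.
Qed.

Lemma cdcoordpoly_scale (f : seq (cd F m)) (P : {poly F}) d :
    (forall j, cdcoordpoly f j = (cdcoordpoly f j)`_d *: P) ->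
  forall i, nth zero f i = mul (nth zero f d) (emb P`_i).
Proof.
move=> coordpolyE i; apply: cdcoord_inj => j.
by rewrite cdcoord_mul_emb // -!coef_cdcoordpoly {1}coordpolyE coefZ mulrC.
Qed.

End SphericalRoots.

Theorem corollary3p20 (F : fieldType) (mu : F) (gam : nat -> F) (k : nat)
  (hk : k = 1%N \/ k = 2%N)
  (hmu : 4%:R * mu + 1 != 0)
  (hgam : forall i, (i < k)%N -> gam i != 0)
  (hdiv : cd_division mu gam k)
  (n : nat) (f : seq (cd F k))
  (hsize : size f = (2 * n).+1)
  (hlead : last (cd0 F k) f <> cd0 F k)
  (lam : 'I_n -> cd F k)
  (hsph : forall i, spherical_root mu gam f (lam i))
  (hdist : forall i j, i <> j -> ~ quad_equiv mu gam (lam i) (lam j)) :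
  exists (c : cd F k) (g : seq F),
    forall i, nth (cd0 F k) f i = cdmul mu gam c (cdemb k (nth 0 g i)).
Proof.
have hk2 : (k <= 2)%N by case: hk => ->.
pose p i := quadp (cdtr (lam i)) (cdnorm mu gam (lam i)).
have noroot i := cd_quadp_noroot hk2 hdiv (hsph i).1.
have coprime_p i j : i != j -> coprimep (p i) (p j).
  move=> /eqP i_neq_j; apply: coprimep_quadp (noroot i) (noroot j) _.
  by apply/eqP => -[tr_eq norm_eq]; apply: (hdist i j i_neq_j).
have size_P : size (\prod_i p i) = (2 * n).+1.
  rewrite size_prod => [|i _]; last exact: monic_neq0 (monic_quadp _ _).
  under eq_bigr do rewrite size_quadp.
  by rewrite sum_nat_const card_ord; lia.
exists (nth (cd0 F k) f (2 * n)), (\prod_i p i).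
apply: cdcoordpoly_scale => // j.
apply: dvdp_monic_eq_scale size_P _ _.
- exact: monic_prod (fun i _ => monic_quadp _ _).
- apply: dvdp_prod_coprime coprime_p _ => i.
  exact (spherical_root_dvdp hk2 hdiv hmu j (hsph i)).
- by rewrite -hsize; exact: size_poly.
Qed.
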